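(* Let $\oplus$ be a combinator whose domain is contained in $V(W)$. Then: (1) $\oplus$ satisfies ($\oplus$SPU+) [for all $x,y,z$: if $x \prec_1 y$ and $z \prec_2 y$ then $x \prec_{1\oplus 2} y$ or $z \prec_{1\oplus 2} y$] if and only if it satisfies ($\oplus$SPU) [for all $x,y$: if $x \prec_1 y$ and $x \prec_2 y$ then $x \prec_{1\oplus 2} y$]; (2) $\oplus$ satisfies ($\oplus$WPU+) [for all $x,y,z$: if $x \preceq_1 y$ and $z \preceq_2 y$ then $x \preceq_{1\oplus 2} y$ or $z \preceq_{1\oplus 2} y$] if and only if it satisfies ($\oplus$WPU) [for all $x,y$: if $x \preceq_1 y$ and $x \preceq_2 y$ then $x \preceq_{1\oplus 2} y$]. (All conditions are required for every pair $\langle\preceq_1,\preceq_2\rangle$ in the domain of $\oplus$.)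
   Context: $W$ is a finite nonempty set (of possible worlds). A tpo is a total preorder on $W$; $\prec$ is its strict part. Two tpos $\preceq_1, \preceq_2$ are $S$-variants ($S \subseteq W$) if $x \preceq_1 y \iff x \preceq_2 y$ for all $(x,y) \in (S\times S) \cup (S^c \times S^c)$; $V(W)$ is the set of pairs $\langle\preceq_1,\preceq_2\rangle$ of tpos that are $S$-variants for some $S \subseteq W$. A combinator $\oplus$ maps pairs of tpos in its domain to a tpo $\preceq_{1\oplus 2}$, with strict part $\prec_{1\oplus 2}$. *)

From mathcomp Require Import all_boot.
Set Implicit Arguments. Unset Strict Implicit. Unset Printing Implicit Defensive.

(* A tpo (total preorder) on W, represented as a boolean relation
   [le x y] meaning x ⪯ y. *)
Definition tpo (W : finType) (le : rel W) : Prop :=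
  (forall x y, le x y || le y x) /\
  (forall x y z, le x y -> le y z -> le x z).

Definition strict (W : finType) (le : rel W) : rel W :=
  fun x y => le x y && ~~ le y x.

Definition S_variants (W : finType) (S : {set W}) (le1 le2 : rel W) : Prop :=
  forall x y : W,
    ((x \in S) && (y \in S)) || ((x \notin S) && (y \notin S)) ->
    (le1 x y = le2 x y).

Definition inV (W : finType) (le1 le2 : rel W) : Prop :=
  tpo le1 /\ tpo le2 /\ exists S : {set W}, S_variants S le1 le2.

Definition combinator (W : finType) (dom : rel W -> rel W -> Prop)
  (comb : rel W -> rel W -> rel W) : Prop :=
  forall le1 le2, dom le1 le2 -> tpo le1 /\ tpo le2 /\ tpo (comb le1 le2).

Definition dom_in_V (W : finType) (dom : rel W -> rel W -> Prop) : Prop :=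
  forall le1 le2, dom le1 le2 -> inV le1 le2.

Definition SPU (W : finType) (dom : rel W -> rel W -> Prop)
  (comb : rel W -> rel W -> rel W) : Prop :=
  forall le1 le2, dom le1 le2 -> forall x y : W,
    strict le1 x y -> strict le2 x y -> strict (comb le1 le2) x y.

Definition SPUplus (W : finType) (dom : rel W -> rel W -> Prop)
  (comb : rel W -> rel W -> rel W) : Prop :=
  forall le1 le2, dom le1 le2 -> forall x y z : W,
    strict le1 x y -> strict le2 z y ->
    strict (comb le1 le2) x y \/ strict (comb le1 le2) z y.

Definition WPU (W : finType) (dom : rel W -> rel W -> Prop)
  (comb : rel W -> rel W -> rel W) : Prop :=
  forall le1 le2, dom le1 le2 -> forall x y : W,
    le1 x y -> le2 x y -> comb le1 le2 x y.

Definition WPUplus (W : finType) (dom : rel W -> rel W -> Prop)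
  (comb : rel W -> rel W -> rel W) : Prop :=
  forall le1 le2, dom le1 le2 -> forall x y z : W,
    le1 x y -> le2 z y ->
    comb le1 le2 x y \/ comb le1 le2 z y.

From mathcomp Require Import all_boot.
Set Implicit Arguments. Unset Strict Implicit. Unset Printing Implicit Defensive.

(* For S-variants, of any three worlds two lie on the same side of S, where
   the two preorders agree.  Hence if x <_1 y and z <_2 y, then x <_2 y or
   z <_1 y: whichever of x, z shares its side with y transfers directly, and
   if x and z share a side, going through y in one order and back in the
   other yields a contradiction.  The same holds for the weak orders.  So
   every instance of the "+" principles is already an instance of the plain
   Pareto principle. *)

Lemma tpo_strictN (W : finType) (le : rel W) (x y : W) :
  tpo le -> ~~ strict le x y -> le y x.
Proof.
move=> [total _]; rewrite /strict negb_and negbK.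
by case/orP=> // nlexy; move: (total x y); rewrite (negbTE nlexy).
Qed.

Lemma tpo_leN (W : finType) (le : rel W) (x y : W) :
  tpo le -> ~~ le x y -> le y x.
Proof. by move=> [total _] nlexy; move: (total x y); rewrite (negbTE nlexy). Qed.

Lemma same_side3 (W : finType) (S : {set W}) (x y z : W) :
  [\/ (x \in S) = (y \in S), (z \in S) = (y \in S) | (z \in S) = (x \in S)].
Proof. by case: (x \in S); case: (y \in S); case: (z \in S); constructor. Qed.

Section Variants.

Variables (W : finType) (S : {set W}) (le1 le2 : rel W).
Hypotheses (tpo1 : tpo le1) (tpo2 : tpo le2) (le12 : S_variants S le1 le2).

Lemma S_variants_eq (a b : W) : (a \in S) = (b \in S) -> le1 a b = le2 a b.
Proof. by move=> eab; apply: le12; rewrite eab; case: (b \in S). Qed.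

Lemma S_variants_strict_transfer (x y z : W) :
  strict le1 x y -> strict le2 z y -> strict le2 x y || strict le1 z y.
Proof.
case: tpo1 tpo2 => [_ tr1] [_ tr2].
move=> /andP[_ nleyx1] /andP[lezy2 nleyz2].
apply/norP=> -[/(tpo_strictN tpo2) leyx2 /(tpo_strictN tpo1) leyz1].
case: (same_side3 S x y z) => [exy|ezy|ezx].
- by move: nleyx1; rewrite S_variants_eq // leyx2.
- by move: nleyz2; rewrite -S_variants_eq // leyz1.
- have lezx1 : le1 z x by rewrite S_variants_eq //; apply: tr2 leyx2.
  by move: nleyx1; rewrite (tr1 _ _ _ leyz1 lezx1).
Qed.

Lemma S_variants_le_transfer (x y z : W) :
  le1 x y -> le2 z y -> le2 x y || le1 z y.
Proof.
case: tpo1 => [_ tr1]; case: tpo2 => [_ tr2] lexy1 lezy2.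
apply/norP=> -[nlexy2 nlezy1]; have leyx2 := tpo_leN tpo2 nlexy2.
case: (same_side3 S x y z) => [exy|ezy|ezx].
- by move: nlexy2; rewrite -S_variants_eq // lexy1.
- by move: nlezy1; rewrite S_variants_eq // lezy2.
- have lezx1 : le1 z x by rewrite S_variants_eq //; apply: tr2 leyx2.
  by move: nlezy1; rewrite (tr1 _ _ _ lezx1 lexy1).
Qed.

End Variants.

Theorem proposition6 (W : finType) (w0 : W)
  (dom : rel W -> rel W -> Prop) (comb : rel W -> rel W -> rel W) :
  combinator dom comb -> dom_in_V dom ->
  (SPUplus dom comb <-> SPU dom comb) /\
  (WPUplus dom comb <-> WPU dom comb).
Proof.
move=> _ inVdom; split; split.
- by move=> SPUp le1 le2 d x y lt1 lt2; case: (SPUp le1 le2 d x y x lt1 lt2).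
- move=> SPU_ le1 le2 d x y z lt1 lt2.
  have [tpo1 [tpo2 [S le12]]] := inVdom _ _ d.
  case/orP: (S_variants_strict_transfer tpo1 tpo2 le12 lt1 lt2) => [ltx | ltz].
  + by left; apply: SPU_.
  + by right; apply: SPU_.
- by move=> WPUp le1 le2 d x y le1xy le2xy; case: (WPUp le1 le2 d x y x le1xy le2xy).
- move=> WPU_ le1 le2 d x y z le1xy le2zy.
  have [tpo1 [tpo2 [S le12]]] := inVdom _ _ d.
  case/orP: (S_variants_le_transfer tpo1 tpo2 le12 le1xy le2zy) => [lex | lez].
  + by left; apply: WPU_.
  + by right; apply: WPU_.
Qed.
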